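(* Let $0<\epsilon<1$ and let $C_1,\ldots,C_n\in\mathbb{R}^3$ be a Pareto-optimal market for $\textsc{ProductDesign}(2)$. Let $r=\max\{\operatorname{ppu}(C_i): i\in\{1,\ldots,n\}\}$, $E=1/(1-\epsilon)$, $\ell=\lceil\log_E n\rceil$, and for $i\in\{0,\ldots,\ell\}$ let $H_i=\{(p,q_1,q_2)\in\mathbb{R}^3: p-q_1-q_2=r(1-\epsilon)^i\}$. Then for every product $P^*=(p^*,q_1^*,q_2^* )\in\mathbb{R}^3$ there exists a product $P\in H_i$ for some $i\in\{0,\ldots,\ell\}$ with $\operatorname{profit}(P)\ge(1-\epsilon)\operatorname{profit}(P^* )$.
   Context: A product $P=(p,q_1,q_2)$ has price $p$ and qualities $q_1,q_2$; its profit per unit is $\operatorname{ppu}(P)=p-q_1-q_2$. A customer $C_i=(p_i,q_{i,1},q_{i,2})$ buys $P$ iff $p\le p_i$ and $q_j\ge q_{i,j}$ for $j=1,2$. $\operatorname{profit}(P)=\operatorname{ppu}(P)\cdot|\{i: C_i \text{ buys } P\}|$. The market is Pareto-optimal: there are no two customers $C_i,C_j$ with $q_{i,k}>q_{j,k}$ for all $k$ and $p_i<p_j$. *)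

From Stdlib Require Import Reals Lra Lia ZArith List.
Open Scope R_scope.

(* A point of R^3: (price, quality 1, quality 2). Used both for products and customers. *)
Record pt3 : Type := Pt3 { price : R; qual1 : R; qual2 : R }.

Definition ppu (P : pt3) : R := price P - qual1 P - qual2 P.

Definition buys (C P : pt3) : Prop :=
  price P <= price C /\ qual1 P >= qual1 C /\ qual2 P >= qual2 C.

Definition buysb (P C : pt3) : bool :=
  if Rle_dec (price P) (price C) then
    if Rge_dec (qual1 P) (qual1 C) then
      if Rge_dec (qual2 P) (qual2 C) then true else false
    else false
  else false.

(* number of customers (with multiplicity) buying P *)
Definition nbuyers (cs : list pt3) (P : pt3) : nat :=
  length (filter (buysb P) cs).

Definition profit (cs : list pt3) (P : pt3) : R := ppu P * INR (nbuyers cs P).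

Definition pareto_optimal (cs : list pt3) : Prop :=
  forall Ci Cj, In Ci cs -> In Cj cs ->
    ~ (qual1 Ci > qual1 Cj /\ qual2 Ci > qual2 Cj /\ price Ci < price Cj).

Definition max_ppu (cs : list pt3) : R :=
  match cs with
  | nil => 0
  | c :: cs' => fold_right Rmax (ppu c) (map ppu cs')
  end.

Definition in_H (r eps : R) (i : nat) (P : pt3) : Prop := ppu P = r * (1 - eps) ^ i.

(* If P* makes no positive profit, a product nobody buys suffices.  Otherwise
   let x > 0 be the profit per unit of P* and k its number of buyers.  If x is
   at least the lowest level r (1-eps)^l, some level lies in [(1-eps) x, x]
   (consecutive levels differ by the factor 1-eps), and lowering the price of
   P* to that level keeps all k buyers.  Otherwise x < r (1-eps)^l <= r / n, so
   the customer of maximal profit per unit, offered as a product on level 0,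
   earns at least r > n x >= k x, since it buys itself. *)
From Stdlib Require Import Reals List ZArith Lra Lia.
Open Scope R_scope.

Lemma buysbP (P C : pt3) : buysb P C = true <-> buys C P.
Proof.
  unfold buysb, buys.
  destruct (Rle_dec (price P) (price C)), (Rge_dec (qual1 P) (qual1 C)),
    (Rge_dec (qual2 P) (qual2 C)); split; intros H; try tauto; try discriminate; lra.
Qed.

Lemma nbuyers_monotone (cs : list pt3) (P1 P2 : pt3) :
  (forall C, buys C P1 -> buys C P2) -> (nbuyers cs P1 <= nbuyers cs P2)%nat.
Proof.
  intros H. unfold nbuyers. induction cs as [|c cs IH]; simpl; [lia|].
  destruct (buysb P1 c) eqn:E1, (buysb P2 c) eqn:E2; simpl; try lia.
  apply buysbP, H, buysbP in E1. congruence.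
Qed.

Lemma nbuyers_le_length (cs : list pt3) (P : pt3) : (nbuyers cs P <= length cs)%nat.
Proof. apply filter_length_le. Qed.

Lemma nbuyers_gt0 (cs : list pt3) (P : pt3) :
  (0 < nbuyers cs P)%nat -> exists C, In C cs /\ buys C P.
Proof.
  unfold nbuyers. intros H.
  destruct (filter (buysb P) cs) as [|C cs'] eqn:E; simpl in H; [lia|].
  assert (HC : In C (filter (buysb P) cs)) by (rewrite E; left; reflexivity).
  apply filter_In in HC as [HC HCP]. exists C. split; [exact HC | apply buysbP, HCP].
Qed.

Lemma nbuyers_eq0 (cs : list pt3) (P : pt3) :
  (forall C, In C cs -> ~ buys C P) -> nbuyers cs P = 0%nat.
Proof.
  intros H. destruct (Nat.eq_0_gt_0_cases (nbuyers cs P)) as [|Hpos]; [assumption|].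
  destruct (nbuyers_gt0 cs P Hpos) as [C [HC HCP]]. exfalso. exact (H C HC HCP).
Qed.

Lemma buys_refl (C : pt3) : buys C C.
Proof. unfold buys. lra. Qed.

Lemma nbuyers_ge1 (cs : list pt3) (C : pt3) : In C cs -> (1 <= nbuyers cs C)%nat.
Proof.
  intros HC. apply (Nat.lt_le_trans _ (length (C :: nil))); [simpl; lia|].
  unfold nbuyers. apply NoDup_incl_length; [constructor; [intros []|constructor]|].
  intros D [<-|[]]. apply filter_In. split; [exact HC | apply buysbP, buys_refl].
Qed.

Lemma ppu_le_of_buys (C P : pt3) : buys C P -> ppu P <= ppu C.
Proof. unfold buys, ppu. lra. Qed.

Lemma max_ppu_spec (cs : list pt3) : cs <> nil ->
  (exists C, In C cs /\ ppu C = max_ppu cs) /\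
  forall C, In C cs -> ppu C <= max_ppu cs.
Proof.
  destruct cs as [|c cs]; [congruence|]. intros _. simpl.
  induction cs as [|d cs [[C [HC HCmax]] Hub]]; simpl.
  - split; [exists c; auto|]. intros C [->|[]]; lra.
  - set (m := fold_right Rmax (ppu c) (map ppu cs)) in *. split.
    + destruct (Rle_dec (ppu d) m).
      * exists C. split; [destruct HC; auto|]. rewrite Rmax_right; auto.
      * exists d. split; auto. rewrite Rmax_left; lra.
    + pose proof (Rmax_l (ppu d) m). pose proof (Rmax_r (ppu d) m).
      intros C0 [<-|[<-|HC0]]; [pose proof (Hub c (or_introl eq_refl)) |
                               | pose proof (Hub C0 (or_intror HC0))]; lra.
Qed.

Lemma qual1_lower_bound (cs : list pt3) : exists b, forall C, In C cs -> b <= qual1 C.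
Proof.
  induction cs as [|c cs [b Hb]]; simpl.
  - exists 0. tauto.
  - exists (Rmin b (qual1 c)). intros C [<-|H].
    + apply Rmin_r.
    + pose proof (Hb C H). pose proof (Rmin_l b (qual1 c)). lra.
Qed.

Lemma exists_unsold_product (cs : list pt3) (v : R) :
  exists P, ppu P = v /\ nbuyers cs P = 0%nat.
Proof.
  destruct (qual1_lower_bound cs) as [b Hb].
  exists (Pt3 (v + 2 * (b - 1)) (b - 1) (b - 1)). split; [unfold ppu; simpl; lra|].
  apply nbuyers_eq0. intros C HC [_ [H _]]. simpl in H. pose proof (Hb C HC). lra.
Qed.

Definition with_ppu (P : pt3) (v : R) : pt3 :=
  Pt3 (price P - (ppu P - v)) (qual1 P) (qual2 P).

Lemma ppu_with_ppu (P : pt3) (v : R) : ppu (with_ppu P v) = v.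
Proof. unfold with_ppu, ppu. simpl. ring. Qed.

Lemma buys_with_ppu (C P : pt3) (v : R) :
  v <= ppu P -> buys C P -> buys C (with_ppu P v).
Proof. unfold buys, with_ppu, ppu. simpl. lra. Qed.

Lemma geometric_level_between (q r x : R) (m : nat) :
  0 < q < 1 -> 0 <= r -> r * q ^ m <= x <= r ->
  exists i, (i <= m)%nat /\ q * x <= r * q ^ i <= x.
Proof.
  intros Hq Hr. induction m as [|m IH]; simpl; intros Hx.
  - exists 0%nat. simpl. split; [lia|]. nra.
  - destruct (Rle_dec (r * q ^ m) x) as [Hm|Hm].
    + destruct (IH (conj Hm (proj2 Hx))) as [i [Hi Hix]]. exists i. split; [lia|exact Hix].
    + exists (S m). split; [lia|]. simpl. nra.
Qed.

Lemma Zceil_log_nonneg (n q : R) :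
  1 <= n -> 0 < q < 1 -> (0 <= Zceil (ln n / ln (1 / q)))%Z.
Proof.
  intros Hn Hq.
  assert (Hlnq : 0 < ln (1 / q)) by (rewrite <- ln_1; apply ln_increasing; [lra|];
    unfold Rdiv; rewrite Rmult_1_l; rewrite <- Rinv_1; apply Rinv_lt_contravar; lra).
  assert (Hlnn : 0 <= ln n).
  { destruct (Req_dec n 1) as [->|]; [rewrite ln_1; lra|].
    rewrite <- ln_1. left. apply ln_increasing; lra. }
  apply le_IZR. pose proof (Zceil_bound (ln n / ln (1 / q))).
  assert (0 <= ln n / ln (1 / q)) by (apply Rmult_le_pos; [lra | left; apply Rinv_0_lt_compat; lra]). lra.
Qed.

Lemma pow_Zceil_log_le (n q : R) :
  1 <= n -> 0 < q < 1 -> n * q ^ Z.to_nat (Zceil (ln n / ln (1 / q))) <= 1.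
Proof.
  intros Hn Hq. set (m := Z.to_nat (Zceil (ln n / ln (1 / q)))).
  assert (Hm : ln n / ln (1 / q) <= INR m).
  { unfold m. rewrite INR_IZR_INZ, Z2Nat.id by exact (Zceil_log_nonneg n q Hn Hq).
    apply Zceil_bound. }
  assert (Hlnq : ln (1 / q) = - ln q) by (rewrite <- ln_Rinv by lra; f_equal; field; lra).
  assert (Hlnq_neg : ln q < 0) by (rewrite <- ln_1; apply ln_increasing; lra).
  assert (Hlog : ln (n * q ^ m) <= 0).
  { rewrite ln_mult, ln_pow by (try apply pow_lt; lra).
    rewrite Hlnq in Hm. apply (Rmult_le_compat_r (- ln q)) in Hm; [|lra].
    unfold Rdiv in Hm. rewrite Rmult_assoc, Rinv_l in Hm by lra. lra. }
  rewrite <- (exp_ln (n * q ^ m)), <- exp_0 by (pose proof (pow_lt q m); nra).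
  destruct Hlog as [Hlt|Heq]; [left; exact (exp_increasing _ _ Hlt) | right; now rewrite Heq].
Qed.

Section Levels.

Variables (eps : R) (cs : list pt3) (m : nat).
Hypothesis Heps : 0 < eps < 1.
Hypothesis Hcs : cs <> nil.
Hypothesis Hm : INR (length cs) * (1 - eps) ^ m <= 1.

Definition approximable_on_levels (Pstar : pt3) : Prop :=
  exists i P, (i <= m)%nat /\ in_H (max_ppu cs) eps i P /\
              profit cs P >= (1 - eps) * profit cs Pstar.

Lemma approximable_nonpositive (Pstar : pt3) :
  profit cs Pstar <= 0 -> approximable_on_levels Pstar.
Proof.
  intros Hp. destruct (exists_unsold_product cs (max_ppu cs * (1 - eps) ^ 0)) as [P [HP HP0]].
  exists 0%nat, P. split; [lia|]. split; [exact HP|].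
  unfold profit at 1. rewrite HP0. simpl. nra.
Qed.

Lemma approximable_above_lowest_level (Pstar : pt3) :
  0 < ppu Pstar -> max_ppu cs * (1 - eps) ^ m <= ppu Pstar <= max_ppu cs ->
  approximable_on_levels Pstar.
Proof.
  intros Hpos Hx.
  assert (Hr : 0 <= max_ppu cs) by lra.
  destruct (geometric_level_between (1 - eps) _ _ m ltac:(lra) Hr Hx) as [i [Him Hi]].
  set (v := max_ppu cs * (1 - eps) ^ i) in Hi.
  exists i, (with_ppu Pstar v). split; [exact Him|]. split; [apply ppu_with_ppu|].
  assert (Hk : (nbuyers cs Pstar <= nbuyers cs (with_ppu Pstar v))%nat).
  { apply nbuyers_monotone. intros C. apply buys_with_ppu. lra. }
  apply le_INR in Hk. pose proof (pos_INR (nbuyers cs Pstar)).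
  unfold profit. rewrite ppu_with_ppu.
  apply Rle_ge, (Rle_trans _ (v * INR (nbuyers cs Pstar))).
  - rewrite <- Rmult_assoc. apply Rmult_le_compat_r; lra.
  - apply Rmult_le_compat_l; nra.
Qed.

Lemma approximable_below_lowest_level (Pstar : pt3) :
  0 < ppu Pstar < max_ppu cs * (1 - eps) ^ m -> approximable_on_levels Pstar.
Proof.
  intros Hx. destruct (max_ppu_spec cs Hcs) as [[C [HC HCmax]] _].
  exists 0%nat, C. split; [lia|]. split; [unfold in_H; simpl; lra|].
  pose proof (le_INR _ _ (nbuyers_ge1 cs C HC)) as H1.
  pose proof (le_INR _ _ (nbuyers_le_length cs Pstar)) as Hk.
  pose proof (pos_INR (nbuyers cs Pstar)). pose proof (pow_lt (1 - eps) m ltac:(lra)).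
  unfold profit. rewrite HCmax. simpl in H1.
  assert (0 < max_ppu cs) by nra.
  assert (ppu Pstar * INR (nbuyers cs Pstar) <= max_ppu cs) by nra.
  nra.
Qed.

Lemma approximable_on_levels_all (Pstar : pt3) : approximable_on_levels Pstar.
Proof.
  destruct (Rle_dec (profit cs Pstar) 0) as [Hp|Hp]; [exact (approximable_nonpositive _ Hp)|].
  assert (Hk : (0 < nbuyers cs Pstar)%nat).
  { destruct (nbuyers cs Pstar) eqn:E; [|lia]. unfold profit in Hp. rewrite E in Hp. simpl in Hp. lra. }
  assert (Hx : 0 < ppu Pstar).
  { pose proof (pos_INR (nbuyers cs Pstar)). unfold profit in Hp. nra. }
  destruct (nbuyers_gt0 cs Pstar Hk) as [C [HC HCP]].
  assert (Hxr : ppu Pstar <= max_ppu cs).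
  { apply (Rle_trans _ (ppu C)); [exact (ppu_le_of_buys C Pstar HCP)|].
    exact (proj2 (max_ppu_spec cs Hcs) C HC). }
  destruct (Rlt_dec (ppu Pstar) (max_ppu cs * (1 - eps) ^ m)).
  - apply approximable_below_lowest_level. lra.
  - apply approximable_above_lowest_level; lra.
Qed.

End Levels.

Theorem lemma3 (eps : R) (cs : list pt3) :
  0 < eps < 1 ->
  cs <> nil ->
  pareto_optimal cs ->
  let n := length cs in
  let r := max_ppu cs in
  let E := 1 / (1 - eps) in
  let l := Zceil (ln (INR n) / ln E) in
  forall Pstar : pt3,
    exists (i : nat) (P : pt3),
      (Z.of_nat i <= l)%Z /\ in_H r eps i P /\
      profit cs P >= (1 - eps) * profit cs Pstar.
Proof.
  intros Heps Hcs _ n r E l Pstar.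
  assert (Hn : 1 <= INR n).
  { unfold n. destruct cs as [|c cs']; [congruence|]. simpl length. rewrite S_INR.
    pose proof (pos_INR (length cs')). lra. }
  assert (Hl : (0 <= l)%Z) by (apply Zceil_log_nonneg; lra).
  destruct (approximable_on_levels_all eps cs (Z.to_nat l) Heps Hcs
              (pow_Zceil_log_le (INR n) (1 - eps) Hn ltac:(lra)) Pstar)
    as [i [P [Hi HP]]].
  exists i, P. split; [lia|exact HP].
Qed.
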